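(* Let $G(q,x):=\sum_{j=-\infty}^{-1}q^{j(j+1)/2}x^j$. For $q\in[0,1]$ and $x\in\mathbb{C}$ with $|x|=a>2$, one has $|G(q,x)|\geq (a-2)/(a(a-1))$. In particular, for $|x|=3$, $|G(q,x)|\geq 1/6$.
   Context: Here $q^0$ is interpreted as $1$ (also for $q=0$), so the term $j=-1$ of $G$ equals $1/x$. *)

From Stdlib Require Import Reals.
From Coquelicot Require Import Coquelicot.
Open Scope R_scope.

(* Reindex j = -(n+1), n : nat;
   then j(j+1)/2 = n(n+1)/2 and x^j = 1/x^(n+1).  Stdlib's pow has q^0 = 1,
   including q = 0, matching the paper's convention. *)
Definition G_term (q : R) (x : C) (n : nat) : C :=
  Cmult (RtoC (q ^ ((n * (n + 1)) / 2)%nat)) (Cinv (pow_n x (n + 1))).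

Definition G_is (q : R) (x : C) (l : C) : Prop := is_series (G_term q x) l.

(* The term j = -1 of G(q, x) is 1/x, of modulus 1/a, while for q in [0, 1] the
   remaining terms are dominated by the geometric tail sum_{n >= 2} a^-n
   = 1 / (a (a - 1)).  The reverse triangle inequality then gives
   |G(q, x)| >= 1/a - 1/(a (a - 1)) = (a - 2) / (a (a - 1)). *)

From Stdlib Require Import Reals Lra Lia.
From Coquelicot Require Import Coquelicot.
Open Scope R_scope.

Section NormedSeries.

Context {K : AbsRing} {V : NormedModule K}.

Lemma norm_is_series_le (a : nat -> V) (b : nat -> R) (la : V) (lb : R) :
  (forall n, norm (a n) <= b n) -> is_series a la -> is_series b lb ->
  norm la <= lb.
Proof.
  intros Hab Ha Hb.
  apply (is_lim_seq_le (fun N => norm (sum_n a N)) (sum_n b) (norm la) lb).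
  - intro N. eapply Rle_trans; [apply norm_sum_n_m | apply sum_n_m_le, Hab].
  - exact (filterlim_comp _ _ _ _ norm _ _ _ Ha (filterlim_norm la)).
  - exact Hb.
Qed.

Lemma norm_is_series_ge_head (a : nat -> V) (b : nat -> R) (la : V) (lb : R) :
  (forall n, norm (a (S n)) <= b n) -> is_series a la -> is_series b lb ->
  norm (a 0%nat) - lb <= norm la.
Proof.
  intros Hab Ha Hb.
  assert (Htail : is_series (fun n => a (S n)) (minus la (a 0%nat))).
  { apply is_series_incr_1.
    unfold minus.
    rewrite <- plus_assoc, (plus_opp_l (G := NormedModule.AbelianGroup K V)), plus_zero_r.
    exact Ha. }
  pose proof (norm_is_series_le _ _ _ _ Hab Htail Hb) as Htail_le.
  pose proof (norm_triangle_inv la (a 0%nat)) as Hinv.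
  apply Rabs_le_between in Hinv. lra.
Qed.

End NormedSeries.

Lemma is_series_geom_shift (r : R) (k : nat) :
  Rabs r < 1 -> is_series (fun n => r ^ (n + k)) (r ^ k / (1 - r)).
Proof.
  intro Hr.
  apply (is_series_ext (fun n => scal (r ^ k) (r ^ n))).
  - intro n. rewrite pow_add. apply Rmult_comm.
  - apply (@is_series_scal R_AbsRing R_NormedModule), is_series_geom, Hr.
Qed.

Lemma G_term_0 (q : R) (x : C) : G_term q x 0 = Cinv x.
Proof.
  unfold G_term. simpl. change (pow_n x 0) with (RtoC 1).
  rewrite Cmult_1_r. apply Cmult_1_l.
Qed.

Lemma Cmod_G_term_le (q : R) (x : C) (n : nat) :
  0 <= q <= 1 -> 0 < Cmod x -> Cmod (G_term q x n) <= (/ Cmod x) ^ (n + 1).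
Proof.
  intros Hq Hx. unfold G_term.
  change (pow_n x (n + 1)) with (Cpow x (n + 1)).
  assert (Hpow : Cpow x (n + 1) <> 0).
  { intro H. apply (f_equal Cmod) in H.
    rewrite Cmod_pow, Cmod_0 in H. apply (pow_nonzero (Cmod x) (n + 1)) in H; lra. }
  rewrite Cmod_mult, Cmod_inv, Cmod_pow, Cmod_R, <- pow_inv by exact Hpow || lra.
  set (k := ((n * (n + 1)) / 2)%nat).
  assert (Hqk : 0 <= q ^ k <= 1).
  { split; [apply pow_le; lra | rewrite <- (pow1 k); apply pow_incr; lra]. }
  rewrite Rabs_pos_eq by lra.
  assert (0 <= (/ Cmod x) ^ (n + 1)) by (apply pow_le; left; apply Rinv_0_lt_compat, Hx).
  nra.
Qed.

Section GBound.

Variables (q : R) (x : C).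
Hypothesis Hq : 0 <= q <= 1.
Hypothesis Hx : 1 < Cmod x.

Let r := / Cmod x.

Let r_range : 0 < r < 1.
Proof.
  split; [apply Rinv_0_lt_compat; lra|].
  rewrite <- Rinv_1. apply Rinv_lt_contravar; lra.
Qed.

Let r_abs : Rabs r < 1.
Proof. rewrite Rabs_pos_eq; lra. Qed.

Lemma ex_series_G_term : ex_series (G_term q x).
Proof.
  apply (ex_series_le (G_term q x) (fun n => r ^ (n + 1))).
  - intro n. apply Cmod_G_term_le; lra.
  - eexists. exact (is_series_geom_shift r 1 r_abs).
Qed.

Lemma Cmod_G_is_ge (l : C) :
  G_is q x l -> / Cmod x - / (Cmod x * (Cmod x - 1)) <= Cmod l.
Proof.
  intro Hl.
  assert (Htail : forall n, Cmod (G_term q x (S n)) <= r ^ (n + 2)).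
  { intro n. replace (n + 2)%nat with (S n + 1)%nat by lia.
    apply Cmod_G_term_le; lra. }
  pose proof (@norm_is_series_ge_head _ C_NormedModule _ _ _ _ Htail Hl
                (is_series_geom_shift r 2 r_abs)) as Hhead.
  change norm with Cmod in Hhead.
  rewrite G_term_0, Cmod_inv in Hhead
    by (intro H0; rewrite H0, Cmod_0 in Hx; lra).
  replace (/ (Cmod x * (Cmod x - 1))) with (r ^ 2 / (1 - r)); [exact Hhead|].
  unfold r. field. split; lra.
Qed.

End GBound.

Theorem lemma1 :
  (forall (q a : R) (x : C), 0 <= q <= 1 -> Cmod x = a -> 2 < a ->
     exists l : C, G_is q x l /\ (a - 2) / (a * (a - 1)) <= Cmod l) /\
  (forall (q : R) (x : C), 0 <= q <= 1 -> Cmod x = 3 ->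
     exists l : C, G_is q x l /\ 1 / 6 <= Cmod l).
Proof.
  assert (Hmain : forall (q a : R) (x : C), 0 <= q <= 1 -> Cmod x = a -> 2 < a ->
            exists l : C, G_is q x l /\ (a - 2) / (a * (a - 1)) <= Cmod l).
  { intros q a x Hq Hxa Ha.
    assert (Hx : 1 < Cmod x) by lra.
    destruct (ex_series_G_term q x Hq Hx) as [l Hl].
    exists l. split; [exact Hl|].
    pose proof (Cmod_G_is_ge q x Hq Hx l Hl) as Hge. rewrite Hxa in Hge.
    replace ((a - 2) / (a * (a - 1))) with (/ a - / (a * (a - 1))); [exact Hge|].
    field. split; lra. }
  split; [exact Hmain|].
  intros q x Hq Hx.
  replace (1 / 6) with ((3 - 2) / (3 * (3 - 1))) by field.
  apply (Hmain q 3 x Hq Hx). lra.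
Qed.
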